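(* For $\ell\ge1$, let $\mathrm{EXACT}_2^\ell:\{0,1\}^{4\ell}\to\{0,1\}$ be defined by splitting the input $x$ into consecutive blocks $b_1,\dots,b_\ell$ of 4 bits each and setting $\mathrm{EXACT}_2^\ell(x_1,\dots,x_{4\ell})=1$ if and only if each block $b_i$ contains exactly two 1s. Then $Q_E(\mathrm{EXACT}_2^\ell)=2\ell$ and $D(\mathrm{EXACT}_2^\ell)=4\ell$.
   Context: $D(h)$ (exact classical query complexity / decision tree complexity) is the minimum depth of a decision tree computing $h$; a decision tree is a rooted binary tree whose internal vertices are labelled by input variables $x_i$ (query $x_i$, go to left child if $0$, right child if $1$) and whose leaves are labelled by output values $0$ or $1$; its depth is the maximum root-to-leaf path length. Quantum query model: a $t$-query quantum query algorithm on inputs $x\in\{0,1\}^m$ acts on a Hilbert space $\mathcal H_{\rm in}\otimes\mathcal H_{\rm work}\otimes\mathcal H_{\rm out}$, where $\mathcal H_{\rm in}$ has orthonormal basis $|0\rangle,\dots,|m\rangle$, $\mathcal H_{\rm work}$ is a finite-dimensional workspace of arbitrary size, and $\mathcal H_{\rm out}$ is one qubit. It is specified by input-independent unitaries $U_0,\dots,U_t$, and on input $x$ produces the state $U_tO_xU_{t-1}O_x\cdots O_xU_0|0\rangle$ ($t$ applications of $O_x$), where the oracle $O_x$ acts on $\mathcal H_{\rm in}$ by $|i\rangle\mapsto(-1)^{x_i}|i\rangle$ with the convention $x_0=0$ (and as the identity on the other registers). The output is obtained by measuring $\mathcal H_{\rm out}$ in the computational basis. The algorithm computes $h$ exactly if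 for every $x$ the output equals $h(x)$ with probability $1$. $Q_E(h)$ is the minimum $t$ such that some $t$-query quantum query algorithm computes $h$ exactly. *)

From HB Require Import structures.
From mathcomp Require Import all_boot all_order all_algebra.
Set Implicit Arguments. Unset Strict Implicit. Unset Printing Implicit Defensive.
Import Order.TTheory GRing.Theory Num.Theory.
Local Open Scope ring_scope.

(* an input x in {0,1}^m is a function 'I_m -> bool (x_1..x_m are x 0 .. x (m-1)) *)
Definition boolfun (m : nat) := ('I_m -> bool) -> bool.

Inductive dtree (m : nat) : Type :=
  | Leaf : bool -> dtree m
  | Node : 'I_m -> dtree m -> dtree m -> dtree m.
Arguments Leaf {m}.
Arguments Node {m}.

Fixpoint dt_eval m (T : dtree m) (x : 'I_m -> bool) : bool :=
  match T with
  | Leaf b => b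
  | Node i l r => if x i then dt_eval r x else dt_eval l x
  end.

Fixpoint dt_depth m (T : dtree m) : nat :=
  match T with
  | Leaf _ => 0
  | Node _ l r => (maxn (dt_depth l) (dt_depth r)).+1
  end.

Definition D_is m (h : boolfun m) (n : nat) : Prop :=
  (exists T : dtree m, (forall x, dt_eval T x = h x) /\ dt_depth T = n) /\
  (forall T : dtree m, (forall x, dt_eval T x = h x) -> (n <= dt_depth T)%N).

(* Computational basis of H_in (x) H_work (x) H_out:
   H_in has basis |0>,...,|m>  ('I_m.+1),
   H_work is of arbitrary finite dimension w.+1 ('I_w.+1),
   H_out is one qubit (bool). Scalars: an algebraically closed
   numeric field C with conjugation (e.g. the complex numbers). *)
Definition basis (m w : nat) := ('I_m.+1 * 'I_w.+1 * bool)%type.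

Section Quantum.
Variable C : numClosedFieldType.
Variables m w : nat.
Local Notation S := (basis m w).

Definition qstate := S -> C.
Definition qop := S -> S -> C.

Definition apply_op (U : qop) (v : qstate) : qstate :=
  fun s => \sum_(s' : S) U s s' * v s'.

Definition unitary (U : qop) : Prop :=
  forall s s' : S, \sum_(k : S) Num.conj (U k s) * U k s' = (s == s')%:R.

(* x_i with the convention x_0 = 0; index i : 'I_m.+1 encodes |i>,
   and for i >= 1, x_i is x (i-1). *)
Definition xbit (x : 'I_m -> bool) (i : 'I_m.+1) : bool :=
  if unlift ord0 i is Some j then x j else false.

Definition oracle (x : 'I_m -> bool) (v : qstate) : qstate :=
  fun s => (if xbit x s.1.1 then -1 else 1) * v s.

Definition init_state : qstate :=
  fun s => (s == (ord0, ord0, false))%:R.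

Fixpoint run (U : nat -> qop) (k : nat) (x : 'I_m -> bool) : qstate :=
  match k with
  | 0 => apply_op (U 0%N) init_state
  | k'.+1 => apply_op (U k) (oracle x (run U k' x))
  end.

Definition prob_out (v : qstate) (b : bool) : C :=
  \sum_(s : S | s.2 == b) `|v s| ^+ 2.

End Quantum.

Definition exact_qalg (C : numClosedFieldType) m (h : boolfun m) (t : nat) : Prop :=
  exists (w : nat) (U : nat -> qop C m w),
    (forall k, (k <= t)%N -> unitary (U k)) /\
    (forall x : 'I_m -> bool, prob_out (run U t x) (h x) = 1).

Definition QE_is (C : numClosedFieldType) m (h : boolfun m) (n : nat) : Prop :=
  exact_qalg C h n /\ (forall t, exact_qalg C h t -> (n <= t)%N).

(* blocks b_i = bits with (0-based) indices 4i, 4i+1, 4i+2, 4i+3 *)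
Definition exact2 (l : nat) : boolfun (4 * l) :=
  fun x => [forall i : 'I_l,
              #|[pred k : 'I_(4 * l) | (k %/ 4 == i)%N && x k]| == 2%N].
Arguments exact2 l x : clear implicits.

(* At the balanced input 1100...1100 every single bit flip
   unbalances a block, so EXACT_2^l is fully sensitive there; the queries on
   the path of a fully sensitive input must cover all variables, so D >= 4l,
   and the tree querying every variable gives D <= 4l.

   After t queries each amplitude is
   a multilinear polynomial of degree <= t in the signs (-1)^(x_i), so the
   acceptance probability of an exact algorithm, i.e. h itself, has degree
   <= 2t.  Polynomials of degree < m are orthogonal to the parity of all m
   bits, while EXACT_2^l is not (all its accepted inputs have even weight
   2l).  Hence 2t >= 4l.

   An explicit 2l-query algorithm: blocks are tested one
   after the other, each with two queries; a round maps the uniform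
   superposition over a block to itself with an amplitude that is 0 for an
   unbalanced block and a cube root of unity for a balanced one, the rest
   being parked in garbage states; a reflection then moves the surviving
   amplitude on to the next block, and finally to the accepting state. *)

From HB Require Import structures.
From mathcomp Require Import all_boot all_order all_algebra.
From mathcomp Require Import zify ring.
Set Implicit Arguments. Unset Strict Implicit. Unset Printing Implicit Defensive.
Import Order.TTheory GRing.Theory Num.Theory.

Lemma exists_notin_short m (Q : seq 'I_m) : (size Q < m)%N -> exists j, j \notin Q.
Proof.
move=> hQ; apply/existsP; rewrite -negb_forall; apply/negP => /forallP hall.
have : (#|'I_m| <= size Q)%N.
  apply: leq_trans (card_size Q); apply: subset_leq_card; apply/subsetP => k _.
  exact: hall.
by rewrite card_ord leqNgt hQ.
Qed.

Section DecisionTrees.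
Variable m : nat.
Implicit Types (T : dtree m) (x y : 'I_m -> bool) (h : boolfun m).

Lemma dt_path_certificate T x : exists Q : seq 'I_m,
  (size Q <= dt_depth T)%N /\
  forall y, (forall i, i \in Q -> y i = x i) -> dt_eval T y = dt_eval T x.
Proof.
elim: T => [b|i l IHl r IHr] /=; first by exists [::].
have extend (Q : seq 'I_m) (T : dtree m) :
    (forall y, (forall i, i \in Q -> y i = x i) -> dt_eval T y = dt_eval T x) ->
    forall y, (forall k, k \in i :: Q -> y k = x k) -> y i = x i /\ dt_eval T y = dt_eval T x.
  move=> hQ y hy; split; first by apply: hy; rewrite mem_head.
  by apply: hQ => k hk; apply: hy; rewrite in_cons hk orbT.
case hx: (x i).
  have [Q [hs hQ]] := IHr; exists (i :: Q).
  split; first by rewrite /= ltnS (leq_trans hs) // leq_maxr.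
  by move=> y /(extend _ _ hQ) [-> ->]; rewrite hx.
have [Q [hs hQ]] := IHl; exists (i :: Q).
split; first by rewrite /= ltnS (leq_trans hs) // leq_maxl.
by move=> y /(extend _ _ hQ) [-> ->]; rewrite hx.
Qed.

Definition flip_bit (j : 'I_m) x : 'I_m -> bool :=
  fun k => if k == j then ~~ x k else x k.

Lemma depth_ge_sensitive h x T :
  (forall y, dt_eval T y = h y) -> (forall j, h (flip_bit j x) != h x) ->
  (m <= dt_depth T)%N.
Proof.
move=> hT hsens; have [Q [hQ hcert]] := dt_path_certificate T x.
rewrite leqNgt; apply/negP => hlt.
have [j hj] := exists_notin_short (leq_ltn_trans hQ hlt).
have := hsens j; rewrite -!hT hcert ?eqxx // => i hi.
by rewrite /flip_bit; case: eqP => // eij; rewrite -eij hi in hj.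
Qed.

Definition set_bit (i : 'I_m) (b : bool) x : 'I_m -> bool :=
  fun k => if k == i then b else x k.

Fixpoint query_tree (L : seq 'I_m) (g : boolfun m) : dtree m :=
  match L with
  | [::] => Leaf (g (fun _ => false))
  | i :: L' => Node i (query_tree L' (fun x => g (set_bit i false x)))
                      (query_tree L' (fun x => g (set_bit i true x)))
  end.

Lemma query_tree_depth L g : dt_depth (query_tree L g) = size L.
Proof. by elim: L g => [|i L IH] g //=; rewrite !IH maxnn. Qed.

Lemma query_tree_eval L g :
  (forall x y, (forall i, i \in L -> x i = y i) -> g x = g y) ->
  forall x, dt_eval (query_tree L g) x = g x.
Proof.
elim: L g => [|i L IH] g hg x /=; first exact: hg.
have eval_set b : dt_eval (query_tree L (fun x => g (set_bit i b x))) x = g (set_bit i b x).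
  apply: IH => y z hyz; apply: hg => k; rewrite in_cons /set_bit.
  by case: eqP => //= _ /hyz.
have set_self : g (set_bit i (x i) x) = g x.
  by apply: hg => k _; rewrite /set_bit; case: eqP => // ->.
by case hx: (x i); rewrite eval_set -set_self hx.
Qed.

Lemma D_fully_sensitive h x :
  (forall y z, y =1 z -> h y = h z) -> (forall j, h (flip_bit j x) != h x) ->
  D_is h m.
Proof.
move=> hext hsens; split; last by move=> T hT; exact: depth_ge_sensitive hT hsens.
exists (query_tree (enum 'I_m) h); split; last by rewrite query_tree_depth size_enum_ord.
by apply: query_tree_eval => y z hyz; apply: hext => k; apply: hyz; rewrite mem_enum.
Qed.

End DecisionTrees.

Lemma blk_lt l (i : 'I_l) (j : 'I_4) : (4 * i + j < 4 * l)%N.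
Proof. have := ltn_ord i; have := ltn_ord j; lia. Qed.
Definition blk l (i : 'I_l) (j : 'I_4) : 'I_(4 * l) := Ordinal (blk_lt i j).

Lemma sum_block (R : nmodType) l (i : 'I_l) (F : 'I_(4 * l) -> R) :
  (\sum_(k : 'I_(4 * l) | (k %/ 4 == i)%N) F k = \sum_(j < 4) F (blk i j))%R.
Proof.
have inj : {in 'I_4 &, injective (blk i)}.
  by move=> a b _ _ /(congr1 val) /= h; apply: val_inj => /=; lia.
rewrite -(big_imset _ inj); apply: eq_bigl => k.
apply/eqP/imsetP => [h|[j _ ->]]; last by rewrite /=; have := ltn_ord j; lia.
have hk : (k %% 4 < 4)%N by rewrite ltn_mod.
exists (Ordinal hk) => //; apply: val_inj => /=.
by rewrite -h; have := divn_eq k 4; lia.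
Qed.

Lemma exact2E l (x : 'I_(4 * l) -> bool) :
  exact2 l x = [forall i : 'I_l, (\sum_(j < 4) x (blk i j) == 2)%N].
Proof.
apply: eq_forallb => i; rewrite -sum1_card big_mkcondr /= sum_block.
by congr (_ == _); apply: eq_bigr => j _; case: (x _).
Qed.

Lemma exact2_ext l (x y : 'I_(4 * l) -> bool) : x =1 y -> exact2 l x = exact2 l y.
Proof.
move=> exy; rewrite !exact2E; apply: eq_forallb => i.
by congr (_ == _); apply: eq_bigr => j _; rewrite exy.
Qed.

Lemma weight_exact2 l (x : 'I_(4 * l) -> bool) : exact2 l x ->
  (\sum_(k : 'I_(4 * l)) (x k : nat) = 2 * l)%N.
Proof.
rewrite exact2E => /forallP hx.
have hp (k : 'I_(4 * l)) : (k %/ 4 < l)%N by have := ltn_ord k; lia.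
rewrite (partition_big (fun k => Ordinal (hp k)) xpredT) //=.
rewrite (eq_bigr (fun _ => 2%N)); first by rewrite sum_nat_const card_ord mulnC.
move=> i _; rewrite -[RHS](eqP (hx i)).
have := sum_block (R := nat) i (fun k => (x k : nat)); rewrite /= => <-.
by apply: eq_bigl => k; rewrite -(inj_eq val_inj).
Qed.

Definition balanced l (k : 'I_(4 * l)) : bool := (k %% 4 < 2)%N.
Arguments balanced l k : clear implicits.

Lemma exact2_balanced l : exact2 l (balanced l).
Proof.
rewrite exact2E; apply/forallP => i.
rewrite !big_ord_recr big_ord0 /balanced /=.
have mod4 j : (j < 4)%N -> ((4 * i + j) %% 4 = j)%N by lia.
by rewrite !mod4.
Qed.

Lemma exact2_flip_balanced l (j : 'I_(4 * l)) :
  exact2 l (flip_bit j (balanced l)) = false.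
Proof.
apply/negbTE; rewrite exact2E negb_forall.
have hi : (j %/ 4 < l)%N by have := ltn_ord j; lia.
apply/existsP; exists (Ordinal hi).
have flipped (j' : 'I_4) : flip_bit j (balanced l) (blk (Ordinal hi) j') =
    (if j' == j %% 4 :> nat then ~~ (j' < 2)%N else (j' < 2)%N).
  have hm : ((4 * (j %/ 4) + j') %% 4 = j')%N by have := ltn_ord j'; lia.
  rewrite /flip_bit /balanced /= hm.
  have -> : (blk (Ordinal hi) j' == j) = (j' == j %% 4 :> nat); last by [].
  apply/eqP/eqP => [/(congr1 val) /= <-|h]; first by rewrite hm.
  by apply: val_inj => /=; rewrite h; have := divn_eq j 4; lia.
under eq_bigr => j' _ do rewrite flipped.
have : (j %% 4 < 4)%N by rewrite ltn_mod.
by rewrite !big_ord_recr big_ord0 /=; case: (j %% 4)%N => [|[|[|[|]]]].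
Qed.

(* D(EXACT_2^l) = 4l: it is fully sensitive at the balanced input. *)
Lemma D_exact2 l : D_is (exact2 l) (4 * l).
Proof.
apply: (D_fully_sensitive (x := balanced l)); first exact: exact2_ext.
by move=> j; rewrite exact2_flip_balanced exact2_balanced.
Qed.

Local Open Scope ring_scope.

Definition sgnb (C : numClosedFieldType) (b : bool) : C := if b then -1 else 1.
Arguments sgnb {C} b.

Lemma conj_sgnb (C : numClosedFieldType) (b : bool) : (sgnb b : C)^* = sgnb b.
Proof. by case: b; rewrite /sgnb ?rmorphN1 ?rmorph1. Qed.

Section PolynomialMethod.
Variable C : numClosedFieldType.
Variable m : nat.
Implicit Types (x : 'I_m -> bool) (f g : ('I_m -> bool) -> C).

Definition character (L : seq 'I_m) x : C := \prod_(j <- L) sgnb (x j).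

Definition deg_le (d : nat) f :=
  exists s : seq (C * seq 'I_m), all (fun p => size p.2 <= d)%N s /\
    forall x, f x = \sum_(p <- s) p.1 * character p.2 x.

Lemma deg_le_const d (c : C) : deg_le d (fun _ => c).
Proof.
exists [:: (c, [::])]; split => //= x.
by rewrite big_cons big_nil /character big_nil mulr1 addr0.
Qed.

Lemma deg_le_add d f g : deg_le d f -> deg_le d g -> deg_le d (fun x => f x + g x).
Proof.
move=> [s [hs hf]] [t [ht hg]]; exists (s ++ t); split; first by rewrite all_cat hs ht.
by move=> x; rewrite big_cat /= hf hg.
Qed.

Lemma deg_le_sum d (I : finType) (F : I -> ('I_m -> bool) -> C) :
  (forall i, deg_le d (F i)) -> deg_le d (fun x => \sum_i F i x).
Proof.
move=> hF; elim: (index_enum I) => [|i r IH].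
  by exists [::]; split => // x; rewrite !big_nil.
have [s [hs hf]] := deg_le_add (hF i) IH.
by exists s; split => // x; rewrite big_cons -hf.
Qed.

Lemma deg_le_mul d1 d2 f g : deg_le d1 f -> deg_le d2 g ->
  deg_le (d1 + d2) (fun x => f x * g x).
Proof.
move=> [s [hs hf]] [t [ht hg]].
exists [seq (p.1 * q.1, p.2 ++ q.2) | p <- s, q <- t]; split.
  apply/allP => z /allpairsP [[p q] [hp hq ->]] /=.
  by rewrite size_cat leq_add // ?(allP hs p hp) ?(allP ht q hq).
move=> x; rewrite hf hg big_allpairs_dep big_distrl /=.
apply: eq_bigr => p _; rewrite big_distrr /=; apply: eq_bigr => q _.
rewrite /character big_cat /=; ring.
Qed.

Lemma deg_le_conj d f : deg_le d f -> deg_le d (fun x => (f x)^*).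
Proof.
move=> [s [hs hf]]; exists [seq (p.1^*, p.2) | p <- s]; split; first by rewrite all_map.
move=> x; rewrite hf rmorph_sum big_map; apply: eq_bigr => p _.
rewrite rmorphM /= /character rmorph_prod; congr (_ * _).
by apply: eq_bigr => j _; exact: conj_sgnb.
Qed.

Lemma deg_le_xbit (i : 'I_m.+1) : deg_le 1 (fun x => if xbit x i then -1 else 1).
Proof.
rewrite /xbit; case: (unlift ord0 i) => [j|]; last exact: deg_le_const.
exists [:: (1, [:: j])]; split => // x.
by rewrite big_cons big_nil /character big_cons big_nil /sgnb mul1r mulr1 addr0.
Qed.

Definition parity (x : {ffun 'I_m -> bool}) : C := \prod_(i : 'I_m) sgnb (x i).

Definition flipf (j : 'I_m) (x : {ffun 'I_m -> bool}) : {ffun 'I_m -> bool} :=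
  [ffun k => if k == j then ~~ x k else x k].

Lemma flipfK j : involutive (flipf j).
Proof. by move=> x; apply/ffunP => k; rewrite !ffunE; case: eqP => //; rewrite negbK. Qed.

(* Characters of fewer than m variables are orthogonal to the parity:
   flipping a variable j outside L negates parity and fixes the character. *)
Lemma parity_character_orth (L : seq 'I_m) : (size L < m)%N ->
  \sum_(x : {ffun 'I_m -> bool}) parity x * character L x = 0.
Proof.
move=> /exists_notin_short [j hj]; set S := \sum_x _.
have hS : S = - S.
  rewrite {1}/S (reindex_inj (inv_inj (flipfK j))) /S -sumrN; apply: eq_bigr => x _.
  have -> : character L (flipf j x) = character L x.
    apply: eq_big_seq => k hk; rewrite ffunE.
    by case: eqP => // e; rewrite -e hk in hj.
  have -> : parity (flipf j x) = - parity x.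
    rewrite /parity (bigD1 j) //= [in RHS](bigD1 j) //= ffunE eqxx.
    rewrite (eq_bigr (fun k => sgnb (x k))); last by move=> k hk; rewrite ffunE (negbTE hk).
    by rewrite /sgnb; case: (x j) => /=; ring.
  by rewrite mulNr.
have : S *+ 2 == 0 by rewrite mulr2n {1}hS addNr.
by rewrite mulrn_eq0 /= => /eqP.
Qed.

Lemma parity_deg_orth d f : deg_le d f -> (d < m)%N ->
  \sum_(x : {ffun 'I_m -> bool}) parity x * f x = 0.
Proof.
move=> [s [hs hf]] hd.
under eq_bigr => x _ do rewrite hf big_distrr.
rewrite exchange_big /= big1_seq // => p /andP [_ hp].
under eq_bigr => x _ do rewrite mulrCA.
rewrite -big_distrr /= parity_character_orth ?mulr0 //.
exact: leq_ltn_trans (allP hs p hp) hd.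
Qed.

End PolynomialMethod.

Section NormPreservation.
Variable C : numClosedFieldType.
Variables m w : nat.
Local Notation S := (basis m w).
Local Notation qst := (qstate C m w).

Definition sqnorm (v : qst) : C := \sum_(s : S) `|v s| ^+ 2.

Lemma apply_norm (U : qop C m w) (v : qst) : unitary U ->
  sqnorm (apply_op U v) = sqnorm v.
Proof.
move=> hU.
have expand s : `|apply_op U v s| ^+ 2 =
    \sum_(a : S) \sum_(b : S) (v a * (v b)^*) * ((U s b)^* * U s a).
  rewrite normCK /apply_op rmorph_sum big_distrl /=.
  apply: eq_bigr => a _; rewrite big_distrr /=; apply: eq_bigr => b _.
  rewrite rmorphM /=; ring.
rewrite /sqnorm; under eq_bigr => s _ do rewrite expand.
rewrite exchange_big /=; apply: eq_bigr => a _; rewrite exchange_big /=.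
under eq_bigr => b _ do rewrite -big_distrr /= hU.
rewrite normCK (bigD1 a) //= eqxx mulr1 big1 ?addr0 //.
by move=> b /negbTE; rewrite eq_sym => ->; rewrite mulr0.
Qed.

Lemma oracle_norm x (v : qst) : sqnorm (oracle x v) = sqnorm v.
Proof.
apply: eq_bigr => s _; rewrite /oracle normrM.
by case: (xbit _ _); rewrite ?normrN normr1 mul1r.
Qed.

Lemma run_norm (U : nat -> qop C m w) t x : (forall k, (k <= t)%N -> unitary (U k)) ->
  sqnorm (run U t x) = 1.
Proof.
elim: t => [|t IH] hU /=.
  rewrite apply_norm; last exact: hU.
  rewrite /sqnorm (bigD1 (ord0, ord0, false)) //= big1.
    by rewrite /init_state eqxx normr1 expr1n addr0.
  by move=> s /negbTE; rewrite /init_state => ->; rewrite normr0 expr0n.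
rewrite apply_norm; last exact: hU.
by rewrite oracle_norm IH // => k hk; apply: hU; exact: leqW.
Qed.

Lemma prob_split (v : qst) : prob_out v true + prob_out v false = sqnorm v.
Proof.
rewrite /prob_out /sqnorm [RHS](bigID (fun s : S => s.2 == true)) /=; congr (_ + _).
by apply: eq_bigl => s; case: (s.2).
Qed.

Lemma exact_prob_true (v : qst) (b : bool) :
  sqnorm v = 1 -> prob_out v b = 1 -> prob_out v true = b%:R.
Proof.
move=> hn hb; have := prob_split v; rewrite hn.
by case: b hb => -> // /(congr1 (fun z => z - 1)); rewrite addrK subrr.
Qed.

Lemma run_deg (U : nat -> qop C m w) t (s : S) : deg_le t (fun x => run U t x s).
Proof.
elim: t s => [|t IH] s /=; first exact: deg_le_const.
apply: deg_le_sum => s'.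
have := deg_le_mul (deg_le_const m 0 (U t.+1 s s')) (deg_le_mul (deg_le_xbit C s'.1.1) (IH s')).
by rewrite add0n add1n.
Qed.

Lemma prob_true_deg (U : nat -> qop C m w) t :
  deg_le (t + t) (fun x => prob_out (run U t x) true).
Proof.
have [q [hq1 hq2]] : deg_le (t + t) (fun x => \sum_(s : S)
    (if s.2 == true then run U t x s * (run U t x s)^* else 0)).
  apply: deg_le_sum => s; case: (s.2 == true); last exact: deg_le_const.
  exact: deg_le_mul (run_deg U t s) (deg_le_conj (run_deg U t s)).
exists q; split => // x; rewrite -hq2 /prob_out big_mkcond /=.
by apply: eq_bigr => s _; rewrite normCK.
Qed.

End NormPreservation.

Lemma exact_alg_parity_orth (C : numClosedFieldType) m (h : boolfun m) t :
  exact_qalg C h t -> (t + t < m)%N ->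
  \sum_(x : {ffun 'I_m -> bool}) parity C x * (h x)%:R = 0.
Proof.
move=> [w [U [hU hP]]] ht.
rewrite -[RHS](parity_deg_orth (prob_true_deg U t) ht); apply: eq_bigr => x _.
by rewrite (exact_prob_true (run_norm x hU) (hP x)).
Qed.

(* EXACT_2^l is not orthogonal to the parity: all accepted inputs are even. *)
Lemma exact2_parity_ne0 (C : numClosedFieldType) l :
  \sum_(x : {ffun 'I_(4 * l) -> bool}) parity C x * (exact2 l x)%:R != 0.
Proof.
have even_accept (x : {ffun 'I_(4 * l) -> bool}) :
    parity C x * (exact2 l x)%:R = (exact2 l x : nat)%:R.
  case hx: (exact2 l x); rewrite ?mulr0 // mulr1.
  rewrite /parity (eq_bigr (fun i => (-1) ^+ (x i : nat))); last first.
    by move=> i _; rewrite /sgnb; case: (x i); rewrite ?expr1 ?expr0.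
  by rewrite prodrXr weight_exact2 // exprM sqrrN !expr1n.
under eq_bigr => x _ do rewrite even_accept.
rewrite -natr_sum pnatr_eq0 -lt0n (bigD1 [ffun k => balanced l k]) //=.
by rewrite (@exact2_ext _ _ (balanced l)) ?exact2_balanced // => k; rewrite ffunE.
Qed.

Lemma QE_exact2_lower (C : numClosedFieldType) l t :
  exact_qalg C (exact2 l) t -> (2 * l <= t)%N.
Proof.
move=> hq; rewrite leqNgt; apply/negP => ht.
have := exact2_parity_ne0 C l.
by rewrite (exact_alg_parity_orth hq) ?eqxx //; lia.
Qed.

Section RankOneOperators.
Variable C : numClosedFieldType.
Variables m w : nat.
Local Notation S := (basis m w).
Local Notation qst := (qstate C m w).
Local Notation qo := (qop C m w).
Implicit Types (u v f g : qst) (U V : qo) (P : pred S).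

(* <v|f>, antilinear in v. *)
Definition inner v f : C := \sum_(s : S) (v s)^* * f s.

Definition ket (p : S) : qst := fun s => (s == p)%:R.

(* I + (c - 1)|v><v|/<v|v>: multiplies the v-component by c, fixes v^perp. *)
Definition phase v (c : C) : qo :=
  fun s s' => (s == s')%:R + (c - 1) / inner v v * (v s * (v s')^*).

Definition reflection v : qo := phase v (-1).

Definition qmul U V : qo := fun s s' => \sum_(k : S) U s k * V k s'.

Definition supported P f := forall s, ~~ P s -> f s = 0.

Lemma sum_ket (p : S) (F : S -> C) : \sum_(s : S) (s == p)%:R * F s = F p.
Proof.
rewrite (bigD1 p) //= eqxx mul1r big1 ?addr0 // => s /negbTE ->; by rewrite mul0r.
Qed.

Lemma inner_ket p f : inner (ket p) f = f p.
Proof.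
rewrite /inner -[RHS](sum_ket p f); apply: eq_bigr => s _.
by rewrite /ket; case: (s == p); rewrite ?rmorph1 ?rmorph0.
Qed.

Lemma inner_selfC v : (inner v v)^* = inner v v.
Proof.
by rewrite /inner rmorph_sum; apply: eq_bigr => s _; rewrite rmorphM /= conjCK mulrC.
Qed.

Lemma inner_ext v f g : f =1 g -> inner v f = inner v g.
Proof. by move=> h; apply: eq_bigr => s _; rewrite h. Qed.

Lemma inner_subl u v f : inner (fun s => u s - v s) f = inner u f - inner v f.
Proof. rewrite /inner -sumrB; apply: eq_bigr => s _; rewrite rmorphB /=; ring. Qed.

Lemma inner_subr v f g : inner v (fun s => f s - g s) = inner v f - inner v g.
Proof. rewrite /inner -sumrB; apply: eq_bigr => s _; ring. Qed.

Lemma inner_disj v f : (forall s, v s = 0 \/ f s = 0) -> inner v f = 0.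
Proof.
move=> h; rewrite /inner big1 // => s _.
by case: (h s) => ->; rewrite ?rmorph0 ?mul0r ?mulr0.
Qed.

Lemma apply_ext U f g : f =1 g -> apply_op U f =1 apply_op U g.
Proof. by move=> h s; apply: eq_bigr => s' _; rewrite h. Qed.

Lemma apply_lin U (a : C) f g s :
  apply_op U (fun s => a * f s + g s) s = a * apply_op U f s + apply_op U g s.
Proof. rewrite /apply_op big_distrr -big_split /=; apply: eq_bigr => s' _; ring. Qed.

Lemma apply_qmul U V f s : apply_op (qmul U V) f s = apply_op U (apply_op V f) s.
Proof.
rewrite /apply_op /qmul; under eq_bigr => s' _ do rewrite big_distrl /=.
rewrite exchange_big /=; apply: eq_bigr => k _.
rewrite big_distrr /=; apply: eq_bigr => s' _; ring.
Qed.

Lemma apply_phase v c f s :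
  apply_op (phase v c) f s = f s + (c - 1) / inner v v * inner v f * v s.
Proof.
rewrite /apply_op /phase; under eq_bigr => s' _ do rewrite mulrDl.
rewrite big_split /=; congr (_ + _).
  by rewrite -[RHS](sum_ket s f); apply: eq_bigr => s' _; rewrite eq_sym.
rewrite /inner [RHS]mulrAC big_distrr /=; apply: eq_bigr => s' _; ring.
Qed.

Lemma apply_phase_disj v c f : (forall s, v s = 0 \/ f s = 0) ->
  apply_op (phase v c) f =1 f.
Proof. by move=> h s; rewrite apply_phase (inner_disj h) mulr0 mul0r addr0. Qed.

Lemma supported_disj P f g : supported P f -> (forall s, P s -> g s = 0) ->
  forall s, f s = 0 \/ g s = 0.
Proof. by move=> hf hg s; case: (boolP (P s)) => hs; [right; exact: hg | left; exact: hf]. Qed.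

Lemma phase_supported P v c f : supported P v -> supported P f ->
  supported P (apply_op (phase v c) f).
Proof. by move=> hv hf s hs; rewrite apply_phase hv // hf // add0r mulr0. Qed.

Lemma oracle_supported P x f : supported P f -> supported P (oracle x f).
Proof. by move=> hf s hs; rewrite /oracle hf // mulr0. Qed.

Lemma phase_unitary v c : c * c^* = 1 -> unitary (phase v c).
Proof.
move=> hc s s'; set n := inner v v; set a := (c - 1) / n.
have conj_a : a^* = (c^* - 1) / n by rewrite /a fmorph_div rmorphB rmorph1 /= inner_selfC.
have cancel : a + a^* + a * a^* * n = 0.
  rewrite conj_a /a; have [->|hn] := eqVneq n 0; first by rewrite !invr0 !mulr0 !addr0.
  transitivity ((c * c^* - 1) / n); last by rewrite hc subrr mul0r.
  by field.
rewrite /phase -/n -/a.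
transitivity (\sum_(k : S) ((k == s)%:R * (k == s')%:R
   + (k == s)%:R * (a * (v k * (v s')^*))
   + (k == s')%:R * (a^* * ((v k)^* * v s))
   + a^* * a * ((v k)^* * v k) * (v s * (v s')^*))).
  apply: eq_bigr => k _; rewrite rmorphD !rmorphM /= conjCK.
  have -> : ((k == s)%:R)^* = (k == s)%:R :> C by case: (k == s); rewrite ?rmorph1 ?rmorph0.
  ring.
rewrite !big_split /= !sum_ket -big_distrl -big_distrr /= -/(inner v v) -/n.
rewrite (_ : _ + _ = (s == s')%:R + (v s * (v s')^*) * (a + a^* + a * a^* * n)); last by ring.
by rewrite cancel mulr0 addr0.
Qed.

Lemma reflection_swap u v : inner u u = 1 -> inner v v = 1 -> inner u v = 0 ->
  inner v u = 0 -> apply_op (reflection (fun s => u s - v s)) u =1 v.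
Proof.
move=> huu hvv huv hvu s.
rewrite apply_phase !inner_subl !inner_subr huu hvv huv hvu.
by field.
Qed.

Lemma reflection_unitary v : unitary (reflection v).
Proof. by apply: phase_unitary; rewrite rmorphN1 mulrNN mulr1. Qed.

Lemma qmul_unitary U V : unitary U -> unitary V -> unitary (qmul U V).
Proof.
move=> hU hV s s'; rewrite /qmul.
transitivity (\sum_(a : S) \sum_(b : S) ((V a s)^* * V b s') * \sum_(k : S) (U k a)^* * U k b).
  under eq_bigr => k _ do rewrite rmorph_sum big_distrl /=.
  rewrite exchange_big /=; apply: eq_bigr => a _.
  under eq_bigr => k _ do rewrite big_distrr /=.
  rewrite exchange_big /=; apply: eq_bigr => b _.
  rewrite big_distrr /=; apply: eq_bigr => k _; rewrite rmorphM /=; ring.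
under eq_bigr => a _ do under eq_bigr => b _ do rewrite hU.
rewrite -(hV s s'); apply: eq_bigr => a _.
rewrite (bigD1 a) //= eqxx mulr1 big1 ?addr0 //.
by move=> b /negbTE; rewrite eq_sym => ->; rewrite mulr0.
Qed.

End RankOneOperators.
Arguments ket {C m w} p _.

Lemma sum4 (R : nmodType) (F : 'I_4 -> R) :
  \sum_(j < 4) F j = F (inord 0) + F (inord 1) + F (inord 2) + F (inord 3).
Proof.
rewrite !big_ord_recr big_ord0 /= add0r.
by congr (_ + _ + _ + _); congr F; apply: val_inj; rewrite /= inordK.
Qed.

Lemma conj_half (C : numClosedFieldType) : (2^-1 : C)^* = 2^-1.
Proof. by rewrite geC0_conj // invr_ge0 ler0n. Qed.

Section Algorithm.
Variable C : numClosedFieldType.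
Variable l : nat.
Local Notation S := (basis (4 * l) l).
Local Notation qst := (qstate C (4 * l) l).
Local Notation qo := (qop C (4 * l) l).
Implicit Types (f g J phi : qst) (s : S) (x : 'I_(4 * l) -> bool).

(* Layout of the basis states |i>|label>|out> used by the algorithm:
   ptb k j = |bit j of block k>|0>|0> carries the query state of block k;
   pstart = |0>|0>|0> is the initial and pend = |0>|0>|1> the accepting state;
   junk k = |0>|k+1>|0> absorbs the amplitude rejected while testing block k. *)
Definition ptb (k : 'I_l) (j : 'I_4) : S := (lift ord0 (blk k j), ord0, false).
Definition pstart : S := (ord0, ord0, false).
Definition pend : S := (ord0, ord0, true).
Definition junk (k : nat) : S := (ord0, inord k.+1, false).

Definition pos s : option 'I_(4 * l) := unlift ord0 s.1.1.
Definition inblk (k : nat) s : bool :=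
  ~~ s.2 && (s.1.2 == ord0) && (if pos s is Some i then (i %/ 4 == k)%N else false).
Definition jdx s : nat := if pos s is Some i then (i %% 4)%N else 0%N.

Definition blockvec (k : nat) (c : nat -> C) : qst :=
  fun s => if inblk k s then c (jdx s) else 0.

Lemma inblk_ptb (k : 'I_l) (j : 'I_4) : inblk k (ptb k j).
Proof. by rewrite /inblk /pos /= liftK /=; apply/eqP; have := ltn_ord j; lia. Qed.

Lemma jdx_ptb (k : 'I_l) (j : 'I_4) : jdx (ptb k j) = j.
Proof. by rewrite /jdx /pos /= liftK /=; have := ltn_ord j; lia. Qed.

Lemma inblkP (k : 'I_l) s : inblk k s = (s \in [set ptb k j | j in 'I_4]).
Proof.
apply/idP/imsetP => [|[j _ ->]]; last exact: inblk_ptb.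
case: s => [[i1 lab] b]; rewrite /inblk /pos /=.
case: b => //=; case: eqP => //= ->; case: (unliftP ord0 i1) => //= i -> /eqP hi.
have hj : (i %% 4 < 4)%N by rewrite ltn_mod.
exists (Ordinal hj) => //; rewrite /ptb; congr (_, _, _); congr (lift _ _).
by apply: val_inj => /=; have := divn_eq i 4; lia.
Qed.

Lemma sum_inblk (k : 'I_l) (F : S -> C) :
  \sum_(s : S) (if inblk k s then F s else 0) = \sum_(j < 4) F (ptb k j).
Proof.
have ptb_inj : injective (ptb k) by move=> a b [] h; apply: val_inj => /=; lia.
rewrite -big_mkcond /= -(big_imset _ (in2W ptb_inj)) /=.
by apply: eq_bigl => s; rewrite inblkP.
Qed.

Lemma blockvec_ptb (k : 'I_l) c (j : 'I_4) : blockvec k c (ptb k j) = c j.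
Proof. by rewrite /blockvec inblk_ptb jdx_ptb. Qed.

Lemma blockvec_junk k c k' : blockvec k c (junk k') = 0.
Proof. by rewrite /blockvec /inblk /pos /= unlift_none andbF. Qed.

Lemma ket_ptb (k : 'I_l) (j : 'I_4) (p : S) : p.1.1 = ord0 -> ket p (ptb k j) = 0 :> C.
Proof.
case: p => [[i a] b] /= ->; rewrite /ket /ptb.
by case: eqP => // [[]] /eqP; rewrite eq_sym (negbTE (neq_lift _ _)).
Qed.

Lemma inner_blockvec (k : 'I_l) c f : (forall j, (c j)^* = c j) ->
  inner (blockvec k c) f = \sum_(j < 4) c j * f (ptb k j).
Proof.
move=> creal.
transitivity (\sum_(j < 4) c (jdx (ptb k j)) * f (ptb k j)); last first.
  by apply: eq_bigr => j _; rewrite jdx_ptb.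
rewrite -(sum_inblk k (fun s => c (jdx s) * f s)); apply: eq_bigr => s _.
by rewrite /blockvec; case: (inblk k s); rewrite ?creal ?rmorph0 ?mul0r.
Qed.

(* The uniform superposition over block k, and two Walsh-Hadamard vectors
   with the characters chi2 j = (-1)^(j_0) and chi3 j = (-1)^(j_0 + j_1). *)
Definition chi2 (j : nat) : C := sgnb (odd j).
Definition chi3 (j : nat) : C := sgnb ((j == 1) || (j == 2))%N.
Definition ub k : qst := blockvec k (fun _ => 2^-1).
Definition hv2 k : qst := blockvec k (fun j => 2^-1 * chi2 j).
Definition hv3 k : qst := blockvec k (fun j => 2^-1 * chi3 j).

Lemma ub_ptb (k : 'I_l) (j : 'I_4) : ub k (ptb k j) = 2^-1.
Proof. exact: blockvec_ptb. Qed.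
Lemma hv2_ptb (k : 'I_l) (j : 'I_4) : hv2 k (ptb k j) = 2^-1 * chi2 j.
Proof. exact: blockvec_ptb. Qed.
Lemma hv3_ptb (k : 'I_l) (j : 'I_4) : hv3 k (ptb k j) = 2^-1 * chi3 j.
Proof. exact: blockvec_ptb. Qed.

Lemma inner_ub (k : 'I_l) f : inner (ub k) f = 2^-1 * \sum_(j < 4) f (ptb k j).
Proof. by rewrite inner_blockvec ?big_distrr // => j; exact: conj_half. Qed.
Lemma inner_hv2 (k : 'I_l) f : inner (hv2 k) f = \sum_(j < 4) 2^-1 * chi2 j * f (ptb k j).
Proof. by rewrite inner_blockvec // => j; rewrite rmorphM /= conj_half conj_sgnb. Qed.
Lemma inner_hv3 (k : 'I_l) f : inner (hv3 k) f = \sum_(j < 4) 2^-1 * chi3 j * f (ptb k j).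
Proof. by rewrite inner_blockvec // => j; rewrite rmorphM /= conj_half conj_sgnb. Qed.

Lemma inner_ub_self (k : 'I_l) : inner (ub k) (ub k) = 1.
Proof. by rewrite inner_ub sum4 !ub_ptb; field. Qed.

Definition omega : C := (-1 + 'i * sqrtC 3) / 2.

(* omega^* = omega^2 = -1 - omega, so omega and -1 - omega are unimodular. *)
Lemma omega_conj : omega^* = -1 - omega.
Proof.
rewrite /omega fmorph_div rmorphD rmorphN1 rmorphM /= conjCi.
rewrite (geC0_conj (x := sqrtC 3)); last by rewrite sqrtC_ge0 ler0n.
by rewrite rmorph_nat; field.
Qed.

Lemma omega_root : omega ^+ 2 + omega + 1 = 0.
Proof.
have h3 : sqrtC 3 ^+ 2 = 3 :> C by rewrite sqrtCK.
rewrite /omega (_ : ((-1 + 'i * sqrtC 3) / 2) ^+ 2 =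
  (1 - 2 * 'i * sqrtC 3 + 'i ^+ 2 * sqrtC 3 ^+ 2) / 4); last by field.
by rewrite h3 sqrCi; field.
Qed.

Lemma omega_unit : omega * omega^* = 1.
Proof. by rewrite omega_conj -[RHS]subr0 -omega_root; ring. Qed.

Lemma omega2_unit : (-1 - omega) * (-1 - omega)^* = 1.
Proof. by rewrite rmorphB rmorphN1 /= omega_conj -[RHS]subr0 -omega_root; ring. Qed.

Definition level k : qst :=
  if k == 0%N then ket pstart else if (k <= l)%N then ub k.-1 else ket pend.

(* transfer k swaps level k and level (k+1). *)
Definition transfer k : qo := reflection (fun s => level k s - level k.+1 s).

(* The test of block k: after the oracle, the Walsh phases and a reflection
   mapping the balanced part of block k back to ub k and the rest to junk k. *)
Definition block_op k : qo :=
  qmul (reflection (fun s => ub k s - ket (junk k) s))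
       (qmul (phase (hv2 k) omega) (phase (hv3 k) (-1 - omega))).

(* The algorithm: transfer 0, then block_op k between two queries and
   transfer (k+1), for k = 0 .. l-1; it makes 2l queries. *)
Definition alg_op (n : nat) : qo := if odd n then block_op n./2 else transfer n./2.

Lemma alg_op_unitary n : unitary (alg_op n).
Proof.
rewrite /alg_op; case: (odd n); last exact: reflection_unitary.
apply: qmul_unitary; first exact: reflection_unitary.
by apply: qmul_unitary; apply: phase_unitary; [exact: omega_unit | exact: omega2_unit].
Qed.

Lemma alg_op_odd k : alg_op k.*2.+1 = block_op k.
Proof. by rewrite /alg_op /= odd_double /= uphalf_double. Qed.

Lemma alg_op_even k : alg_op k.*2 = transfer k.
Proof. by rewrite /alg_op odd_double half_double. Qed.

(* The amplitude with which one round maps ub k back to itself: zero for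
   unbalanced blocks and a cube root of unity for balanced ones. *)
Definition block_amp (b0 b1 b2 b3 : bool) : C :=
  if (b0 + b1 + b2 + b3 == 2)%N then
    (if b0 == b1 then 1 else if b0 == b2 then omega else -1 - omega) else 0.

Definition block_amplitude x (k : 'I_l) : C :=
  block_amp (x (blk k (inord 0))) (x (blk k (inord 1)))
            (x (blk k (inord 2))) (x (blk k (inord 3))).

Lemma block_amplitude_norm x (k : 'I_l) :
  `|block_amplitude x k| ^+ 2 = (\sum_(j < 4) x (blk k j) == 2)%N%:R.
Proof.
rewrite normCK sum4 /block_amplitude /block_amp.
by case: (x _); case: (x _); case: (x _); case: (x _);
  rewrite /= ?mul0r ?rmorph0 ?mulr0 ?rmorph1 ?mulr1 ?omega_unit ?omega2_unit.
Qed.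

Lemma block_norms (k : 'I_l) :
  [/\ inner (hv3 k) (hv3 k) = 1, inner (hv2 k) (hv2 k) = 1 &
      inner (fun s => ub k s - ket (junk k) s) (fun s => ub k s - ket (junk k) s) = 2].
Proof.
split.
- by rewrite inner_hv3 sum4 !hv3_ptb /chi3 /sgnb !inordK //=; field.
- by rewrite inner_hv2 sum4 !hv2_ptb /chi2 /sgnb !inordK //=; field.
rewrite inner_subl inner_ub inner_ket sum4 !ub_ptb ?ket_ptb //.
by rewrite /ub blockvec_junk /ket eqxx (_ : true%:R = 1 :> C) //; field.
Qed.

Lemma oracle_ptb x f (k : 'I_l) (j : 'I_4) :
  oracle x f (ptb k j) = sgnb (x (blk k j)) * f (ptb k j).
Proof. by rewrite /oracle /xbit /= liftK. Qed.

Definition block_out x (k : 'I_l) : qst :=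
  oracle x (apply_op (block_op k) (oracle x (ub k))).

Lemma block_round x (k : 'I_l) : inner (ub k) (block_out x k) = block_amplitude x k.
Proof.
have [n3 n2 nd] := block_norms k.
set d : qst := fun s => ub k s - ket (junk k) s.
set y0 := oracle x (ub k).
set y1 := apply_op (phase (hv3 k) (-1 - omega)) y0.
set y2 := apply_op (phase (hv2 k) omega) y1.
set y3 := apply_op (reflection d) y2.
have -> : inner (ub k) (block_out x k) = inner (ub k) (oracle x y3).
  by apply: inner_ext => s; rewrite /block_out /oracle apply_qmul (apply_ext _ (apply_qmul _ _ _)).
have e1 s : y1 s = y0 s + (-1 - omega - 1) * inner (hv3 k) y0 * hv3 k s.
  by rewrite /y1 apply_phase n3 divr1.
have e2 s : y2 s = y1 s + (omega - 1) * inner (hv2 k) y1 * hv2 k s.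
  by rewrite /y2 apply_phase n2 divr1.
have y2_junk : y2 (junk k) = 0.
  by rewrite e2 e1 /y0 /oracle /hv2 /hv3 /ub !blockvec_junk !mulr0 !addr0.
have e3 s : y3 s = y2 s - inner (ub k) y2 * d s.
  rewrite /y3 apply_phase nd /d inner_subl inner_ket y2_junk subr0.
  by rewrite (_ : (-1 - 1) / 2 = -1 :> C) ?mulN1r ?mulNr //; field.
rewrite inner_ub sum4 !oracle_ptb !e3 /d !ub_ptb ?ket_ptb // inner_ub sum4 !e2.
rewrite inner_hv2 sum4 !e1 inner_hv3 sum4 !hv2_ptb !hv3_ptb /y0 !oracle_ptb !ub_ptb.
rewrite /chi2 /chi3 !inordK // /block_amplitude /block_amp.
by case: (x _); case: (x _); case: (x _); case: (x _); rewrite /sgnb /=; field.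
Qed.

(* Where discarded amplitude sits once blocks 0 .. k-1 have been tested:
   the query positions of those blocks and the junk labels 1 .. k. *)
Definition garbage k s : bool :=
  ~~ s.2 && (((s.1.2 == ord0) && (if pos s is Some i then (i %/ 4 < k)%N else false))
             || ((s.1.1 == ord0) && (0 < s.1.2 <= k)%N)).

Definition active k s : bool := inblk k s || (s == junk k).

Lemma garbage_active k s : (k < l)%N -> garbage k s -> active k s = false.
Proof.
move=> hk; rewrite /garbage /active /inblk.
case: s => [[i1 lab] b] /=; case: b => //=.
case: (unliftP ord0 i1) => [i ->|->] /=.
  rewrite /pos /= liftK orbF => /andP [hl h].
  case: (@eqP _ (lift ord0 i, lab, false) (junk k)) => [[e _]|_].
    by move: e; rewrite /bump leq0n.
  rewrite orbF andbC; apply/negbTE; rewrite negb_and; apply/orP; left; apply/eqP; lia.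
rewrite /pos /= unlift_none !andbF /= => /andP [h1 h2].
apply/negbTE; apply/eqP => [[e]].
by have := congr1 val e; rewrite /= inordK; lia.
Qed.

Lemma active_garbage k s : (k < l)%N -> active k s -> garbage k.+1 s.
Proof.
move=> hk; rewrite /active /garbage.
case/orP => [|/eqP ->]; last by rewrite /= inordK ?ltnS // leqnn /= orbT.
rewrite /inblk; case/andP => [/andP [-> ->]] /=.
by case: (pos s) => // i /eqP ->; rewrite leqnn.
Qed.

Lemma garbage_S k s : garbage k s -> garbage k.+1 s.
Proof.
rewrite /garbage; case/andP => -> /= /orP [/andP [-> h]|/andP [-> /andP [h1 h2]]].
  by case: (pos s) h => // i h; rewrite ltnS ltnW.
by rewrite h1 (leq_trans h2) ?orbT.
Qed.

Lemma garbage_out k s : garbage k s -> s.2 = false.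
Proof. by case/andP => /negbTE. Qed.

Lemma blockvec_supported k c : supported (active k) (blockvec k c).
Proof. by move=> s; rewrite /active negb_or => /andP [h _]; rewrite /blockvec (negbTE h). Qed.

Lemma ub_supported k : supported (active k) (ub k).
Proof. exact: blockvec_supported. Qed.

Lemma ket_junk_supported k : supported (active k) (ket (junk k) : qst).
Proof. by move=> s; rewrite /active negb_or => /andP [_ h]; rewrite /ket (negbTE h). Qed.

Lemma level_S k : (k < l)%N -> level k.+1 = ub k.
Proof. by move=> hk; rewrite /level /= hk. Qed.

Lemma level_SS_garbage k s : garbage k.+1 s -> level k.+2 s = 0.
Proof.
rewrite /level /=; case: ifP => hk; last first.
  by move=> /garbage_out; rewrite /ket; case: eqP => // ->.
rewrite /ub /blockvec /inblk /garbage; case: ifP => // /andP [/andP [_ h0] hp].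
case/andP => _ /orP [/andP [_ h]|/and3P [_ h1 _]].
  by case: (pos s) hp h => // i /eqP ->; rewrite ltnn.
by rewrite (eqP h0) in h1.
Qed.

Lemma level_SS_active k s : (k < l)%N -> active k s -> level k.+2 s = 0.
Proof. by move=> hk /(active_garbage hk) /level_SS_garbage. Qed.

Lemma inner_level_SS k : inner (level k.+2) (level k.+2) = 1.
Proof.
rewrite /level /=; case: ifP => hk; last by rewrite inner_ket /ket eqxx.
by have -> : ub k.+1 = ub (Ordinal hk) by []; exact: inner_ub_self.
Qed.

Lemma block_op_supported k f :
  supported (active k) f -> supported (active k) (apply_op (block_op k) f).
Proof.
move=> hf.
have walsh : supported (active k)
    (apply_op (qmul (phase (hv2 k) omega) (phase (hv3 k) (-1 - omega))) f).
  move=> s hs; rewrite apply_qmul; move: s hs.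
  apply: (phase_supported (P := active k)); first exact: blockvec_supported.
  by apply: (phase_supported (P := active k)); first exact: blockvec_supported.
move=> s hs; rewrite apply_qmul; move: s hs.
apply: (phase_supported (P := active k)) => // t ht.
by rewrite ub_supported // ket_junk_supported // subr0.
Qed.

Lemma block_op_disj k g : (forall s, active k s -> g s = 0) ->
  apply_op (block_op k) g =1 g.
Proof.
move=> hg.
have disj (v : qst) : supported (active k) v -> forall s, v s = 0 \/ g s = 0.
  by move=> hv; exact: supported_disj hv hg.
have ub_junk : supported (active k) (fun s => ub k s - ket (junk k) s).
  by move=> s hs; rewrite ub_supported // ket_junk_supported // subr0.
have walsh : apply_op (qmul (phase (hv2 k) omega) (phase (hv3 k) (-1 - omega))) g =1 g.
  move=> s; rewrite apply_qmul (apply_ext _ (g := g)); last first.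
    by apply: apply_phase_disj; apply: disj; exact: blockvec_supported.
  by apply: apply_phase_disj; apply: disj; exact: blockvec_supported.
move=> s; rewrite apply_qmul (apply_ext _ walsh).
exact/apply_phase_disj/disj.
Qed.

Lemma block_out_supported x (k : 'I_l) : supported (active k) (block_out x k).
Proof.
apply: oracle_supported; apply: block_op_supported.
by apply: oracle_supported; exact: ub_supported.
Qed.

(* A round "query, block_op k, query" maps a * ub k + J to a * block_out + J
   when J is garbage: the garbage is outside the active region of block k. *)
Lemma round_apply x (k : 'I_l) (a : C) J f :
  supported (garbage k) J -> f =1 (fun s => a * ub k s + J s) ->
  oracle x (apply_op (block_op k) (oracle x f)) =1
  (fun s => a * block_out x k s + J s).
Proof.
move=> hJ hf.
have oJ_active s : active k s -> oracle x J s = 0.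
  move=> hs; apply: oracle_supported hJ _ _.
  by apply: contraL hs => /(garbage_active (ltn_ord k)) ->.
have E1 : oracle x f =1 (fun s => a * oracle x (ub k) s + oracle x J s).
  by move=> s; rewrite /oracle hf; ring.
have E2 : apply_op (block_op k) (oracle x f) =1
    (fun s => a * apply_op (block_op k) (oracle x (ub k)) s + oracle x J s).
  by move=> s; rewrite (apply_ext _ E1) apply_lin (block_op_disj oJ_active).
move=> s; have := E2 s; rewrite /block_out /oracle => ->.
by case: (xbit _ _); ring.
Qed.

Lemma transfer_apply (k : 'I_l) (a : C) phi J :
  supported (active k) phi -> supported (garbage k) J ->
  apply_op (transfer k.+1) (fun s => a * phi s + J s) =1
  (fun s => a * inner (ub k) phi * level k.+2 s
            + (a * (phi s - inner (ub k) phi * ub k s) + J s)).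
Proof.
move=> hphi hJ s; have hk := ltn_ord k.
rewrite apply_lin /transfer (level_S hk).
have lev_active t : active k t -> level k.+2 t = 0 by exact: level_SS_active.
rewrite [X in _ + X]apply_phase_disj; last first.
  move=> t; case hg: (garbage k t); last by right; apply: hJ; rewrite hg.
  left; have hR : active k t = false by exact: garbage_active.
  by rewrite ub_supported ?hR // level_SS_garbage ?subr0 //; exact: garbage_S.
have ub_lev : inner (ub k) (level k.+2) = 0.
  by apply: inner_disj; exact: supported_disj (@ub_supported k) lev_active.
have lev_ub : inner (level k.+2) (ub k) = 0.
  apply: inner_disj => t; have := supported_disj (@ub_supported k) lev_active t.
  by case; [right | left].
have lev_phi : inner (level k.+2) phi = 0.
  apply: inner_disj => t; have := supported_disj hphi lev_active t.
  by case; [right | left].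
rewrite apply_phase !inner_subl !inner_subr inner_ub_self inner_level_SS ub_lev lev_ub lev_phi.
by field.
Qed.

Lemma run_round x (k : 'I_l) (a : C) J f :
  supported (garbage k) J -> f =1 (fun s => a * ub k s + J s) ->
  exists J', supported (garbage k.+1) J' /\
  apply_op (transfer k.+1) (oracle x (apply_op (block_op k) (oracle x f))) =1
  (fun s => a * block_amplitude x k * level k.+2 s + J' s).
Proof.
move=> hJ hf; have hk := ltn_ord k.
exists (fun s => a * (block_out x k s - block_amplitude x k * ub k s) + J s); split.
  move=> s hs.
  have hs' : ~~ garbage k s by apply: contra hs; exact: garbage_S.
  have hR : ~~ active k s by apply: contra hs; exact: active_garbage.
  by rewrite hJ // ub_supported // block_out_supported // mulr0 subr0 mulr0 addr0.
move=> s; rewrite (apply_ext _ (round_apply x hJ hf)) transfer_apply ?block_round //.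
exact: block_out_supported.
Qed.

Lemma run_start x : (0 < l)%N -> run alg_op 0 x =1 ub 0.
Proof.
move=> hl s /=; rewrite (_ : alg_op 0 = transfer 0) // /transfer (level_S hl).
have -> : ub 0 = ub (Ordinal hl) by [].
have hstart : @init_state C (4 * l) l =1 ket pstart by [].
have ub_start : ub (Ordinal hl) pstart = 0.
  by rewrite /ub /blockvec /inblk /pos /= unlift_none ?andbF.
have -> : level 0 = ket pstart by [].
rewrite (apply_ext _ hstart) reflection_swap ?inner_ket ?inner_ub_self ?ub_start //.
by rewrite inner_ub sum4 ?ket_ptb // !addr0 mulr0.
Qed.

Lemma prod_amplitude_S x (k : 'I_l) :
  \prod_(b < l | (b < k.+1)%N) block_amplitude x b =
  (\prod_(b < l | (b < k)%N) block_amplitude x b) * block_amplitude x k.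
Proof.
rewrite (bigD1 k) //= mulrC; congr (_ * _); apply: eq_bigl => b.
by rewrite ltnS andbC -(inj_eq val_inj) ltn_neqAle.
Qed.

(* Invariant: after k rounds (2k queries) the state is the product of the
   first k block amplitudes times level (k+1), plus garbage. *)
Lemma run_invariant x k : (0 < l)%N -> (k <= l)%N ->
  exists J, supported (garbage k) J /\
  run alg_op k.*2 x =1
  (fun s => (\prod_(b < l | (b < k)%N) block_amplitude x b) * level k.+1 s + J s).
Proof.
move=> hl; elim: k => [|k IH] hk.
  exists (fun _ => 0); split => // s.
  by rewrite big_pred0 // mul1r addr0 (level_S hl) run_start.
have [J [hJ hrun]] := IH (ltnW hk).
rewrite (level_S hk) in hrun.
have [J' [hJ' hround]] := run_round x (k := Ordinal hk) hJ hrun.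
exists J'; split => // s.
rewrite doubleS /= alg_op_odd -doubleS alg_op_even hround.
by rewrite (prod_amplitude_S x (Ordinal hk)).
Qed.

(* At the end all non-garbage amplitude sits on |pend>, with the product of
   the block amplitudes, whose modulus is 1 iff every block is balanced. *)
Lemma alg_prob_true x : (0 < l)%N ->
  prob_out (run alg_op l.*2 x) true = (exact2 l x)%:R.
Proof.
move=> hl; have [J [hJ hrun]] := run_invariant x hl (leqnn l).
have level_end : level l.+1 =1 ket pend by move=> s; rewrite /level /= ltnn.
rewrite /prob_out (bigD1 pend) //= [X in _ + X]big1; last first.
  move=> s /andP [h1 h2]; rewrite hrun level_end /ket (negbTE h2) mulr0 add0r.
  by rewrite hJ ?normr0 ?expr0n //; apply/negP => /garbage_out; rewrite (eqP h1).
rewrite addr0 hrun level_end /ket eqxx mulr1 hJ ?addr0; last by apply/negP => /garbage_out.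
under eq_bigl => b do rewrite ltn_ord.
rewrite normr_prod -prodrXl.
under eq_bigr => b _ do rewrite block_amplitude_norm.
rewrite exact2E; case: forallP => [h|h].
  by rewrite big1 // => b _; rewrite h.
have [b hb] : exists b : 'I_l, ~~ (\sum_(j < 4) x (blk b j) == 2)%N.
  by apply/existsP; rewrite -negb_forall; apply/forallP.
by rewrite (bigD1 b) //= (negbTE hb) mul0r.
Qed.

End Algorithm.

Lemma QE_exact2_upper (C : numClosedFieldType) l :
  (0 < l)%N -> exact_qalg C (exact2 l) (2 * l).
Proof.
move=> hl; exists l, (@alg_op C l); split; first by move=> k _; exact: alg_op_unitary.
move=> x; rewrite mul2n.
have := prob_split (run (@alg_op C l) l.*2 x).
rewrite run_norm => [|k _]; last exact: alg_op_unitary.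
rewrite alg_prob_true //; case hx: (exact2 l x) => /= split.
  by rewrite alg_prob_true // hx.
by move: split; rewrite add0r.
Qed.

Theorem theorem3p2 (C : numClosedFieldType) (l : nat) :
  (1 <= l)%N -> QE_is C (exact2 l) (2 * l) /\ D_is (exact2 l) (4 * l).
Proof.
move=> hl; split; last exact: D_exact2.
split; first exact: QE_exact2_upper.
by move=> t; exact: QE_exact2_lower.
Qed.
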